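(* Let $\delta\in(0,1)$ and $N,\ell,k\in\mathbb{N}$ satisfy $N\ge 10k\cdot n^{(1-\delta)\ell}$ and $k\ge 20$. If an $n$-vertex graph $G$ contains a clique of size $\lceil n^\delta\rceil$, then with probability at least $0.9$ over $G'\sim \mathrm{RGP}_{N,\ell}(G)$, the graph $G'$ contains a $k$-clique.
   Context: Randomized graph product: given an $n$-vertex graph $G=(V,E)$ and positive integers $N,\ell$, the random graph $G'=(V',E')\sim\mathrm{RGP}_{N,\ell}(G)$ is constructed as follows. For each $i\in[N]$, independently sample $\ell$ vertices uniformly at random from $V$ (independently of each other) and let $S_i\subseteq V$ be the set of sampled vertices. The vertex set is $V'=\{S_1,\dots,S_N\}$ (one vertex per index $i\in[N]$), and for distinct $i,j\in[N]$, $(S_i,S_j)\in E'$ iff $S_i\cup S_j$ induces a clique in $G$. *)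

From mathcomp Require Import all_boot all_order all_algebra.
From mathcomp Require Import reals exp.
Set Implicit Arguments. Unset Strict Implicit. Unset Printing Implicit Defensive.
Import Order.TTheory GRing.Theory Num.Theory.
Local Open Scope ring_scope.

(* A simple graph on a finite vertex type V: e symmetric and irreflexive
   (these are hypotheses of the theorem). *)

Definition is_clique (V : finType) (e : rel V) (K : {set V}) : bool :=
  [forall x in K, forall y in K, (x != y) ==> e x y].

(* An outcome of the RGP sampling: for each i in [N], an ordered list of
   l independent uniform vertices (outcome space is uniform). *)
Definition rgp_outcome (V : finType) (N l : nat) : finType :=
  {ffun 'I_N -> {ffun 'I_l -> V}}.

Definition rgp_set (V : finType) (N l : nat) (w : rgp_outcome V N l)
  (i : 'I_N) : {set V} := [set w i j | j : 'I_l].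

Definition rgp_edge (V : finType) (e : rel V) (N l : nat)
  (w : rgp_outcome V N l) (i j : 'I_N) : bool :=
  (i != j) && is_clique e (rgp_set w i :|: rgp_set w j).

Definition rgp_has_clique (V : finType) (e : rel V) (N l k : nat)
  (w : rgp_outcome V N l) : bool :=
  [exists I : {set 'I_N}, (#|I| == k) &&
     [forall i in I, forall j in I, (i != j) ==> rgp_edge e w i j]].

Definition unif_prob (R : numFieldType) (T : finType) (A : pred T) : R :=
  #|[set x | A x]|%:R / #|T|%:R.

(* Fix a clique K of G with s >= n^delta vertices and call an index i good
   when all l samples of S_i land in K.  Any two good indices are adjacent in
   G', because the union of their sets lies in K; so G' has a k-clique as soon
   as k indices are good.  The number of good indices is binomial with N
   trials and success probability p = (s/n)^l, so its mean mu = N p is at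
   least 10k by the hypothesis on N, and its variance is at most mu.
   Chebyshev's inequality bounds the probability of fewer than k good indices
   by mu / (mu - k)^2 <= 1 / (0.81 mu) < 1/10. *)

From mathcomp Require Import all_boot all_order all_algebra.
From mathcomp Require Import reals exp.
From mathcomp Require Import ring lra.
Set Implicit Arguments. Unset Strict Implicit. Unset Printing Implicit Defensive.
Import Order.TTheory GRing.Theory Num.Theory.
Local Open Scope ring_scope.

Section ProductSpace.
Variables (R : realFieldType) (I U : finType).
Local Notation W := {ffun I -> U}.

Lemma sum_ffun_app (i : I) (f : U -> R) :
  (\sum_(w : W) f (w i)) * #|U|%:R = (\sum_v f v) * #|W|%:R.
Proof.
pose g x v := if x == i then f v else 1.
have -> : \sum_(w : W) f (w i) = \prod_x \sum_v g x v.
  rewrite bigA_distr_bigA /=; apply: eq_bigr => w _.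
  by rewrite (bigD1 i) //= /g eqxx big1 ?mulr1 // => x /negbTE ->.
have -> : #|W|%:R = \prod_(x : I) (#|U|%:R : R).
  by rewrite card_ffun natrX prodr_const.
rewrite (bigD1 i) // [in RHS](bigD1 i) //= {1}/g eqxx mulrAC -mulrA.
congr (_ * (_ * _)); apply: eq_bigr => x /negbTE xi.
by rewrite /g xi sumr_const.
Qed.

Lemma sum_ffun_app2_eq0 (i j : I) (f g : U -> R) :
  i != j -> \sum_v f v = 0 -> \sum_(w : W) f (w i) * g (w j) = 0.
Proof.
move=> ij f0.
pose G x v := if x == i then f v else if x == j then g v else 1.
have -> : \sum_(w : W) f (w i) * g (w j) = \prod_x \sum_v G x v.
  rewrite bigA_distr_bigA /=; apply: eq_bigr => w _.
  rewrite (bigD1 i) //= (bigD1 j) 1?eq_sym //= /G eqxx eq_sym (negbTE ij) eqxx.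
  by rewrite big1 ?mulr1 // => x /andP[/negbTE -> /negbTE ->].
by rewrite (bigD1 i) //= /G eqxx f0 mul0r.
Qed.

Lemma sum_ffun_sqr_sum (h : U -> R) : \sum_v h v = 0 ->
  (\sum_(w : W) (\sum_i h (w i)) ^+ 2) * #|U|%:R =
  #|I|%:R * (\sum_v h v ^+ 2) * #|W|%:R.
Proof.
move=> h0.
have -> : \sum_(w : W) (\sum_i h (w i)) ^+ 2 = \sum_i \sum_(w : W) h (w i) ^+ 2.
  under eq_bigr do rewrite expr2 mulr_suml; rewrite exchange_big /=.
  apply: eq_bigr => i _; under eq_bigr do rewrite mulr_sumr.
  rewrite exchange_big /= (bigD1 i) //= [X in _ + X]big1 ?addr0 => [|j ji].
    by apply: eq_bigr => w _; rewrite expr2.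
  by apply: sum_ffun_app2_eq0; rewrite 1?eq_sym.
rewrite mulr_suml (eq_bigr _ (fun i _ => sum_ffun_app i (fun v => h v ^+ 2))).
by rewrite sumr_const -[_ *+ _]mulr_natl mulrA.
Qed.

End ProductSpace.

Section IndicatorCount.
Variables (R : realFieldType) (I U : finType) (A : {pred U}).
Hypothesis U_gt0 : (0 < #|U|)%N.
Local Notation W := {ffun I -> U}.
Let p : R := #|A|%:R / #|U|%:R.

Lemma sum_count_dev_sqr_le :
  \sum_(w : W) (#|[set i | w i \in A]|%:R - #|I|%:R * p) ^+ 2 <=
  #|I|%:R * p * #|W|%:R.
Proof.
pose h v := (v \in A)%:R - p.
have U_gt0R : 0 < #|U|%:R :> R by rewrite ltr0n.
have pU : p * #|U|%:R = #|A|%:R by rewrite divfK ?gt_eqF.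
have sum_ind : \sum_v (v \in A)%:R = #|A|%:R :> R.
  rewrite -sum1_card natr_sum [RHS]big_mkcond /=.
  by apply: eq_bigr => v _; case: (v \in A).
have h_sum0 : \sum_v h v = 0.
  by rewrite sumrB sum_ind sumr_const -[p *+ _]mulr_natr pU subrr.
have h_sqr : \sum_v h v ^+ 2 <= #|A|%:R.
  have -> : \sum_v h v ^+ 2 = \sum_v ((v \in A)%:R * (1 - 2 * p) + p ^+ 2).
    by apply: eq_bigr => v _; rewrite /h; case: (v \in A) => /=; ring.
  rewrite big_split /= -mulr_suml sum_ind sumr_const -[p ^+ 2 *+ _]mulr_natr.
  have p_ge0 : 0 <= p by rewrite divr_ge0 ?ler0n.
  have := ler0n R #|A|; nra.
have count_dev (w : W) :
    #|[set i | w i \in A]|%:R - #|I|%:R * p = \sum_i h (w i).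
  rewrite sumrB sumr_const -[p *+ _]mulr_natl.
  rewrite -sum1_card natr_sum [in LHS]big_mkcond /=.
  by congr (_ - _); apply: eq_bigr => i _; rewrite inE; case: (w i \in A).
under eq_bigr do rewrite count_dev.
rewrite -(ler_pM2r U_gt0R) sum_ffun_sqr_sum //.
rewrite [X in _ <= X]mulrAC -(mulrA _ p) pU.
by rewrite ler_wpM2r ?ler0n // ler_wpM2l ?ler0n.
Qed.

Lemma chebyshev_count_lt (k : nat) : k%:R <= #|I|%:R * p ->
  #|[set w : W | (#|[set i | w i \in A]| < k)%N]|%:R * (#|I|%:R * p - k%:R) ^+ 2
  <= #|I|%:R * p * #|W|%:R.
Proof.
set mu := _ * p; set B := [set w | _] => k_le_mu.
apply: le_trans sum_count_dev_sqr_le.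
have -> : #|B|%:R * (mu - k%:R) ^+ 2 = \sum_(w in B) (mu - k%:R) ^+ 2.
  by rewrite sumr_const mulr_natl.
rewrite [X in _ <= X](bigID (mem B)) /=.
apply: ler_wpDr; first by apply: sumr_ge0 => w _; rewrite sqr_ge0.
apply: ler_sum => w; rewrite inE => count_lt.
have : #|[set i | w i \in A]|%:R <= k%:R :> R by rewrite ler_nat ltnW.
rewrite -/mu; move: k_le_mu; set c := #|_|%:R; nra.
Qed.

Lemma unif_prob_count_lt_le (k : nat) :
  (2 <= k)%N -> (10 * k)%:R <= #|I|%:R * p ->
  unif_prob R (fun w : W => #|[set i | w i \in A]| < k)%N <= 10^-1.
Proof.
move=> k_ge2 k_le_mu; set mu := _ * p in k_le_mu.
have W_gt0 : 0 < #|W|%:R :> R by rewrite ltr0n card_ffun expn_gt0 U_gt0.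
have k_le_mu' : k%:R <= mu.
  by apply: le_trans k_le_mu; rewrite ler_nat leq_pmull.
have := chebyshev_count_lt k_le_mu'.
rewrite /unif_prob ler_pdivrMr // -/mu; set b := #|_|%:R; set n := #|_|%:R.
move=> cheb; rewrite natrM in k_le_mu.
have k_ge2R : 2 <= k%:R :> R by rewrite (ler_nat R 2).
have b_ge0 : 0 <= b by rewrite ler0n.
have mu_gt0 : 0 < mu by lra.
have : b * (81 / 100 * mu) * mu <= n * mu.
  rewrite [n * mu]mulrC; apply: le_trans cheb; rewrite -mulrA ler_wpM2l //.
  have : 9 / 10 * mu <= mu - k%:R by lra.
  nra.
rewrite ler_pM2r //; nra.
Qed.

End IndicatorCount.

Lemma unif_probDC (R : numFieldType) (T : finType) (E : pred T) :
  (0 < #|T|)%N ->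
  unif_prob R E + unif_prob R (predC E) = 1.
Proof.
move=> T_gt0; rewrite /unif_prob.
have -> : [set x | predC E x] = ~: [set x | E x].
  by apply/setP => x; rewrite !inE.
by rewrite -mulrDl -natrD cardsC divff // pnatr_eq0 -lt0n.
Qed.

Lemma unif_prob_le (R : numFieldType) (T : finType) (E F : pred T) :
  (forall x, E x -> F x) -> unif_prob R E <= unif_prob R F.
Proof.
move=> EF; rewrite /unif_prob ler_wpM2r ?invr_ge0 ?ler0n // ler_nat.
by apply/subset_leq_card/subsetP => x; rewrite !inE => /EF.
Qed.

Lemma is_clique_subset (V : finType) (e : rel V) (K S : {set V}) :
  S \subset K -> is_clique e K -> is_clique e S.
Proof.
move=> /subsetP SK /forall_inP cliqueK.
apply/forall_inP => x xS; apply/forall_inP => y yS.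
by have /forall_inP := cliqueK x (SK x xS); apply; apply: SK.
Qed.

Lemma exists_subset_card (T : finType) (A : {set T}) (k : nat) :
  (k <= #|A|)%N -> exists2 B : {set T}, B \subset A & #|B| = k.
Proof.
move=> k_le; exists [set x in take k (enum A)].
  by apply/subsetP => x; rewrite inE => /mem_take; rewrite mem_enum.
rewrite cardsE; move/card_uniqP: (take_uniq k (enum_uniq (mem A))) => ->.
by rewrite size_takel // -cardE.
Qed.

Lemma rgp_set_subset (V : finType) (N l : nat) (w : rgp_outcome V N l)
    (i : 'I_N) (K : {set V}) :
  (rgp_set w i \subset K) = (w i \in ffun_on K).
Proof.
apply/subsetP/ffun_onP => [sub j | inK _ /imsetP[j _ ->] //].
by apply: sub; apply: imset_f.
Qed.

Lemma rgp_has_clique_of_subsets (V : finType) (e : rel V) (N l k : nat)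
    (w : rgp_outcome V N l) (K : {set V}) :
  is_clique e K -> (k <= #|[set i | w i \in ffun_on K]|)%N ->
  rgp_has_clique e k w.
Proof.
move=> cliqueK /exists_subset_card[I sub_I card_I].
apply/existsP; exists I; rewrite card_I eqxx /=.
apply/forall_inP => i iI; apply/forall_inP => j jI; apply/implyP => ij.
rewrite /rgp_edge ij; apply: is_clique_subset cliqueK.
move/subsetP: sub_I => sub_I.
by rewrite subUset !rgp_set_subset -!(in_set (fun i => w i \in _)) !sub_I.
Qed.

Lemma le_mul_pow_ratio (R : realType) (n s l : nat) (delta c x : R) :
  (0 < n)%N -> 0 <= c -> n%:R `^ delta <= s%:R ->
  c * n%:R `^ ((1 - delta) * l%:R) <= x -> c <= x * (s%:R / n%:R) ^+ l.
Proof.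
move=> n_gt0 c_ge0 q_le_s; set q := n%:R `^ delta.
have n_gt0R : 0 < n%:R :> R by rewrite ltr0n.
have q_gt0 : 0 < q by rewrite powR_gt0.
have -> : n%:R `^ ((1 - delta) * l%:R) = (n%:R / q) ^+ l.
  rewrite mulrBl mul1r powRB; last by apply/implyP => _; rewrite gt_eqF.
  by rewrite powRrM !powR_mulrn ?powR_ge0 ?ltW // expr_div_n.
have inv_pow : (n%:R / q) ^+ l * (q / n%:R) ^+ l = 1.
  by rewrite -exprMn mulrA divfK ?gt_eqF // divff ?gt_eqF // expr1n.
move=> le_x; have x_ge0 : 0 <= x.
  by apply: le_trans le_x; rewrite mulr_ge0 // exprn_ge0 // divr_ge0 ?ltW.
have -> : c = c * (n%:R / q) ^+ l * (q / n%:R) ^+ l.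
  by rewrite -mulrA inv_pow mulr1.
apply: le_trans (ler_wpM2r _ le_x) _.
  by rewrite exprn_ge0 // divr_ge0 ?ltW.
have [n_ge0R q_ge0] := (ltW n_gt0R, ltW q_gt0).
by rewrite ler_wpM2l // lerXn2r ?nnegrE ?divr_ge0 ?ler0n // ler_pM2r ?invr_gt0.
Qed.

Theorem lemma2p1 (R : realType) (V : finType) (e : rel V) (delta : R)
  (N l k : nat) :
  symmetric e -> irreflexive e -> (0 < #|V|)%N ->
  0 < delta < 1 ->
  (10 * k)%:R * ((#|V|)%:R `^ ((1 - delta) * l%:R)) <= (N%:R : R) ->
  (20 <= k)%N ->
  (exists K : {set V},
      is_clique e K /\ #|K| = `|Num.ceil ((#|V|)%:R `^ delta)|%N) ->
  9 / 10 <= unif_prob R (rgp_has_clique e k (N:=N) (l:=l)).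
Proof.
move=> _ _ V_gt0 /andP[delta_gt0 _] N_ge k_ge20 [K [cliqueK cardK]].
have K_ge : #|V|%:R `^ delta <= #|K|%:R :> R.
  rewrite cardK natr_absz ger0_norm ?ceil_ge // ceil_ge0.
  by rewrite (lt_le_trans _ (powR_ge0 _ _)) // ltrN10.
have mean_ge : (10 * k)%:R <= #|'I_N|%:R *
    (#|ffun_on K : {pred {ffun 'I_l -> V}}|%:R / #|{ffun 'I_l -> V}|%:R) :> R.
  rewrite card_ord card_ffun_on card_ffun card_ord !natrX -expr_div_n.
  exact: le_mul_pow_ratio N_ge.
have U_gt0 : (0 < #|{ffun 'I_l -> V}|)%N by rewrite card_ffun expn_gt0 V_gt0.
have W_gt0 : (0 < #|rgp_outcome V N l|)%N by rewrite card_ffun expn_gt0 U_gt0.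
have k_ge2 : (2 <= k)%N by apply: leq_trans k_ge20.
have few_bad := unif_prob_count_lt_le U_gt0 k_ge2 mean_ge.
have rare : unif_prob R (predC (rgp_has_clique e k (N:=N) (l:=l))) <= 10^-1.
  apply: le_trans _ few_bad; apply: unif_prob_le => w; rewrite ltnNge.
  exact/contra/rgp_has_clique_of_subsets.
have := unif_probDC R (rgp_has_clique e k (N:=N) (l:=l)) W_gt0.
lra.
Qed.
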